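(* Let $0<\lambda<1$, $0<\beta<1$, and put $D=-3\lambda^2+4\beta^2+4\lambda-4\beta$. (1) If $(\lambda,\beta)\in P$, then the set of nonzero idempotents of $\mathcal{B}'(\lambda,\beta)$ is $\{o,\ a,\ b,\ o+(1-2\lambda)a,\ o+(1-2\lambda)b\}$. (2) If $(\lambda,\beta)\notin P$ (equivalently $D\neq 0$), then the set of nonzero idempotents of $\mathcal{B}'(\lambda,\beta)$ is $\{o,\ a,\ b,\ o+(1-2\lambda)a,\ o+(1-2\lambda)b,\ j_0,\ j_1\}\setminus\{0\}$, where for $\varepsilon\in\{0,1\}$ $$j_\varepsilon=\varepsilon\, o+\frac{\lambda(1-2\varepsilon\lambda)}{D}(2\beta-\lambda)\,a+\frac{\lambda(1-2\varepsilon\lambda)}{D}(2-2\beta-\lambda)\,b+2\Big(\frac{\lambda(1-2\varepsilon\lambda)}{D}\Big)^2(2\beta-\lambda)(2-2\beta-\lambda)\,c.$$ (Elements in these lists may coincide for special parameter values.)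
   Context: For real parameters $0<\lambda<1$ and $0<\beta<1$, $\mathcal{B}'(\lambda,\beta)$ denotes the commutative (non-associative) $4$-dimensional real algebra with basis $\{o,a,b,c\}$ whose bilinear commutative multiplication $\circ$ is determined by $o\circ o=o$, $o\circ a=\lambda a$, $o\circ b=\lambda b$, $a\circ a=a$, $b\circ b=b$, $a\circ b=\frac{\lambda-\beta}{\lambda}a+\frac{\lambda+\beta-1}{\lambda}b+c$, and $c\circ x=x\circ c=0$ for every $x$. (In the paper the basis vector $c$ is written $ab$.) An element $x$ is idempotent if $x\circ x=x$. The set $P$ is $P=\{(\lambda,\beta)\mid 0<\lambda\le \tfrac13,\ \beta=\tfrac12\big(1\pm\sqrt{(1-\lambda)(1-3\lambda)}\big)\}$; for $0<\lambda<1$, $0<\beta<1$ one has $(\lambda,\beta)\in P$ iff $-3\lambda^2+4\beta^2+4\lambda-4\beta=0$. *)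

From Stdlib Require Import Reals Lra.
Open Scope R_scope.

(* Elements of B'(lambda,beta): coordinates w.r.t. the basis {o,a,b,c} (c = "ab"). *)
Record vec := mkV { co : R; ca : R; cb : R; cc : R }.

Definition vzero : vec := mkV 0 0 0 0.
Definition vadd (x y : vec) : vec :=
  mkV (co x + co y) (ca x + ca y) (cb x + cb y) (cc x + cc y).
Definition vscale (r : R) (x : vec) : vec :=
  mkV (r * co x) (r * ca x) (r * cb x) (r * cc x).

Definition e_o : vec := mkV 1 0 0 0.
Definition e_a : vec := mkV 0 1 0 0.
Definition e_b : vec := mkV 0 0 1 0.
Definition e_c : vec := mkV 0 0 0 1.

Inductive basis := Bo | Ba | Bb | Bc.

Definition coord (x : vec) (i : basis) : R :=
  match i with Bo => co x | Ba => ca x | Bb => cb x | Bc => cc x end.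

Definition mulB (lam bet : R) (i j : basis) : vec :=
  match i, j with
  | Bo, Bo => e_o
  | Bo, Ba | Ba, Bo => vscale lam e_a
  | Bo, Bb | Bb, Bo => vscale lam e_b
  | Ba, Ba => e_a
  | Bb, Bb => e_b
  | Ba, Bb | Bb, Ba =>
      vadd (vscale ((lam - bet) / lam) e_a)
           (vadd (vscale ((lam + bet - 1) / lam) e_b) e_c)
  | Bc, _ | _, Bc => vzero
  end.

Definition all_basis : list basis := Bo :: Ba :: Bb :: Bc :: nil.

Definition bmul (lam bet : R) (x y : vec) : vec :=
  List.fold_right (fun i acc =>
    List.fold_right (fun j acc' =>
      vadd (vscale (coord x i * coord y j) (mulB lam bet i j)) acc') acc all_basis)
    vzero all_basis.

Definition idempotent (lam bet : R) (x : vec) : Prop := bmul lam bet x x = x.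

Definition inP (lam bet : R) : Prop :=
  0 < lam <= 1/3 /\
  (bet = (1 + sqrt ((1 - lam) * (1 - 3 * lam))) / 2 \/
   bet = (1 - sqrt ((1 - lam) * (1 - 3 * lam))) / 2).

Definition Dval (lam bet : R) : R := -3 * lam^2 + 4 * bet^2 + 4 * lam - 4 * bet.

Definition jvec (lam bet eps : R) : vec :=
  let t := lam * (1 - 2 * eps * lam) / Dval lam bet in
  vadd (vscale eps e_o)
   (vadd (vscale (t * (2 * bet - lam)) e_a)
    (vadd (vscale (t * (2 - 2 * bet - lam)) e_b)
          (vscale (2 * t^2 * (2 * bet - lam) * (2 - 2 * bet - lam)) e_c))).

(* Write x = p o + q a + r b + s c and mu = 1 - 2 lam p.  The o- and c-coordinates of
   x o x are p^2 and 2qr, and after clearing lam the a- and b-equations of x o x = x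
   factor as q * l1 = 0 and r * l2 = 0, where l1 = lam q + 2 (lam - bet) r - lam mu and
   l2 = 2 (lam + bet - 1) q + lam r - lam mu.  So p is 0 or 1, and either q or r
   vanishes (giving 0, o, a, b, o + (1-2lam) a, o + (1-2lam) b), or (q, r) solves the
   linear system l1 = l2 = 0, whose determinant is exactly D.  By Cramer's rule this
   solution is j_p when D <> 0; when D = 0 the same identities force
   lam mu (2 - 2 lam) = 0, impossible since D = 0 entails lam <= 1/3. *)

From Stdlib Require Import Reals Lra.
Open Scope R_scope.
Set Implicit Arguments.

Lemma inP_iff_Dval_eq0 (lam bet : R) : 0 < lam < 1 -> inP lam bet <-> Dval lam bet = 0.
Proof.
  intros Hl; unfold inP, Dval; split.
  - intros [[_ Hl3] Hbet].
    assert (Hsqrt : sqrt ((1 - lam) * (1 - 3 * lam)) * sqrt ((1 - lam) * (1 - 3 * lam))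
                    = (1 - lam) * (1 - 3 * lam)) by (apply sqrt_sqrt; nra).
    destruct Hbet as [-> | ->]; nra.
  - intros HD.
    assert (Hsq : (2 * bet - 1) * (2 * bet - 1) = (1 - lam) * (1 - 3 * lam)) by nra.
    assert (Hpos : 0 <= (1 - lam) * (1 - 3 * lam)) by (rewrite <- Hsq; apply Rle_0_sqr).
    split; [split; nra |].
    destruct (Rle_dec 0 (2 * bet - 1)) as [Hs | Hs].
    + left; rewrite <- Hsq, sqrt_square by exact Hs; lra.
    + right; replace ((2 * bet - 1) * (2 * bet - 1)) with ((1 - 2 * bet) * (1 - 2 * bet)) in Hsq
        by ring.
      rewrite <- Hsq, sqrt_square by lra; lra.
Qed.

Section Idempotents.

Variables lam bet : R.
Hypothesis lam_neq0 : lam <> 0.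

Lemma bmul_diag (p q r s : R) :
  bmul lam bet (mkV p q r s) (mkV p q r s) =
  mkV (p * p) (2 * lam * p * q + q * q + 2 * q * r * (lam - bet) / lam)
      (2 * lam * p * r + r * r + 2 * q * r * (lam + bet - 1) / lam) (2 * q * r).
Proof.
  unfold bmul, mulB, vadd, vscale, e_o, e_a, e_b, e_c, vzero, coord, all_basis; simpl.
  f_equal; field; exact lam_neq0.
Qed.

Let eq_iff_div_eq0 (x y e : R) : x - y = e / lam -> x = y <-> e = 0.
Proof.
  intros Hxy; split; intros E.
  - replace e with (lam * (x - y)) by (rewrite Hxy; field; exact lam_neq0).
    rewrite E; ring.
  - rewrite E in Hxy; unfold Rdiv in Hxy; lra.
Qed.

Lemma idempotent_mkV (p q r s : R) :
  idempotent lam bet (mkV p q r s) <->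
  p * p = p /\
  q * (lam * q + 2 * (lam - bet) * r - lam * (1 - 2 * lam * p)) = 0 /\
  r * (2 * (lam + bet - 1) * q + lam * r - lam * (1 - 2 * lam * p)) = 0 /\
  s = 2 * q * r.
Proof.
  unfold idempotent; rewrite bmul_diag.
  rewrite <- (@eq_iff_div_eq0 (2 * lam * p * q + q * q + 2 * q * r * (lam - bet) / lam) q)
    by (field; exact lam_neq0).
  rewrite <- (@eq_iff_div_eq0 (2 * lam * p * r + r * r + 2 * q * r * (lam + bet - 1) / lam) r)
    by (field; exact lam_neq0).
  split.
  - intros E; injection E as Ep Eq Er Es; auto.
  - intros (Ep & Eq & Er & Es); rewrite Ep, Eq, Er, Es; reflexivity.
Qed.

Definition basic_idempotent (x : vec) : Prop :=
  x = e_o \/ x = e_a \/ x = e_b \/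
  x = vadd e_o (vscale (1 - 2 * lam) e_a) \/ x = vadd e_o (vscale (1 - 2 * lam) e_b).

(* [l1 = l2 = 0] in the notation of the header, solved by Cramer's rule. *)
Definition cramer_solution (x : vec) : Prop :=
  (co x = 0 \/ co x = 1) /\
  Dval lam bet * ca x = lam * (1 - 2 * lam * co x) * (2 * bet - lam) /\
  Dval lam bet * cb x = lam * (1 - 2 * lam * co x) * (2 - 2 * bet - lam) /\
  cc x = 2 * ca x * cb x.

Lemma basic_idempotent_neq0 (x : vec) : basic_idempotent x -> x <> vzero.
Proof.
  intros Hx E; subst x.
  destruct Hx as [E | [E | [E | [E | E]]]]; injection E; lra.
Qed.

Lemma basic_idempotent_idempotent (x : vec) : basic_idempotent x -> idempotent lam bet x.
Proof.
  intros Hx.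
  destruct Hx as [-> | [-> | [-> | [-> | ->]]]];
    unfold vadd, vscale, e_o, e_a, e_b; simpl; apply idempotent_mkV; repeat split; ring.
Qed.

Lemma jvec_idempotent (eps : R) :
  Dval lam bet <> 0 -> eps = 0 \/ eps = 1 -> idempotent lam bet (jvec lam bet eps).
Proof.
  intros HD Heps; unfold jvec, vadd, vscale, e_o, e_a, e_b, e_c; simpl.
  apply idempotent_mkV; unfold Dval in *.
  destruct Heps as [-> | ->]; repeat split; field; exact HD.
Qed.

Lemma axis_idempotent (p q r : R) :
  p = 0 \/ p = 1 ->
  (q = 0 /\ (r = 0 \/ r = 1 - 2 * lam * p)) \/ (r = 0 /\ q = 1 - 2 * lam * p) ->
  mkV p q r (2 * q * r) = vzero \/ basic_idempotent (mkV p q r (2 * q * r)).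
Proof.
  unfold basic_idempotent, vzero, vadd, vscale, e_o, e_a, e_b; simpl.
  intros [-> | ->] [[-> [-> | ->]] | [-> ->]];
    repeat (first [left; f_equal; ring | right]); f_equal; ring.
Qed.

Lemma idempotent_cases (x : vec) :
  idempotent lam bet x -> x = vzero \/ basic_idempotent x \/ cramer_solution x.
Proof.
  destruct x as [p q r s]; rewrite idempotent_mkV.
  intros (Ep & Eq & Er & ->).
  assert (Hp : p = 0 \/ p = 1).
  { assert (Hp : p * (p - 1) = 0) by lra.
    apply Rmult_integral in Hp; lra. }
  destruct (Req_dec q 0) as [Hq | Hq]; [| destruct (Req_dec r 0) as [Hr | Hr]].
  - rewrite <- or_assoc; left; apply axis_idempotent; [exact Hp | left; split; [exact Hq |]].
    subst q; apply Rmult_integral in Er as [Er | Er]; [left; exact Er | right].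
    apply (Rmult_eq_reg_l lam); [lra | exact lam_neq0].
  - rewrite <- or_assoc; left; apply axis_idempotent; [exact Hp | right; split; [exact Hr |]].
    subst r; apply Rmult_integral in Eq as [Eq | Eq]; [contradiction |].
    apply (Rmult_eq_reg_l lam); [lra | exact lam_neq0].
  - right; right.
    apply Rmult_integral in Eq as [Eq | Eq]; [contradiction |].
    apply Rmult_integral in Er as [Er | Er]; [contradiction |].
    split; [exact Hp |]; split; [| split; [| reflexivity]]; simpl.
    + transitivity (lam * (1 - 2 * lam * p) * (2 * bet - lam)
                    + lam * (lam * q + 2 * (lam - bet) * r - lam * (1 - 2 * lam * p))
                    - 2 * (lam - bet)
                      * (2 * (lam + bet - 1) * q + lam * r - lam * (1 - 2 * lam * p)));
        [unfold Dval; ring | rewrite Eq, Er; ring].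
    + transitivity (lam * (1 - 2 * lam * p) * (2 - 2 * bet - lam)
                    + lam * (2 * (lam + bet - 1) * q + lam * r - lam * (1 - 2 * lam * p))
                    - 2 * (lam + bet - 1)
                      * (lam * q + 2 * (lam - bet) * r - lam * (1 - 2 * lam * p)));
        [unfold Dval; ring | rewrite Eq, Er; ring].
Qed.

End Idempotents.

Lemma Dval_neq0_of_cramer_solution (lam bet : R) (x : vec) :
  0 < lam < 1 -> cramer_solution lam bet x -> Dval lam bet <> 0.
Proof.
  intros Hl (Hp & Hq & Hr & _) HD.
  assert (Hl3 : lam <= 1 / 3)
    by (apply inP_iff_Dval_eq0 in HD as [[_ Hl3] _]; [exact Hl3 | exact Hl]).
  rewrite HD in Hq, Hr.
  (* Adding the two Cramer equations gives [lam (1 - 2 lam p) (2 - 2 lam) = 0]. *)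
  assert (Hsum : lam * (1 - 2 * lam * co x) * (2 - 2 * lam) = 0) by nra.
  destruct Hp as [Hp | Hp]; rewrite Hp in Hsum; nra.
Qed.

Lemma cramer_solution_jvec (lam bet : R) (x : vec) :
  Dval lam bet <> 0 -> cramer_solution lam bet x -> x = jvec lam bet 0 \/ x = jvec lam bet 1.
Proof.
  destruct x as [p q r s]; unfold cramer_solution; simpl.
  intros HD (Hp & Hq & Hr & ->).
  assert (Eq : q = lam * (1 - 2 * lam * p) * (2 * bet - lam) / Dval lam bet)
    by (rewrite <- Hq; field; exact HD).
  assert (Er : r = lam * (1 - 2 * lam * p) * (2 - 2 * bet - lam) / Dval lam bet)
    by (rewrite <- Hr; field; exact HD).
  rewrite Eq, Er; unfold jvec, vadd, vscale, e_o, e_a, e_b, e_c; simpl.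
  destruct Hp as [-> | ->]; [left | right]; f_equal; field; exact HD.
Qed.

Theorem mainTheorem2 (lam bet : R) (Hl : 0 < lam < 1) (Hb : 0 < bet < 1) :
  (inP lam bet ->
     forall x : vec, (x <> vzero /\ idempotent lam bet x) <->
       (x = e_o \/ x = e_a \/ x = e_b \/
        x = vadd e_o (vscale (1 - 2 * lam) e_a) \/
        x = vadd e_o (vscale (1 - 2 * lam) e_b))) /\
  (~ inP lam bet ->
     forall x : vec, (x <> vzero /\ idempotent lam bet x) <->
       ((x = e_o \/ x = e_a \/ x = e_b \/
         x = vadd e_o (vscale (1 - 2 * lam) e_a) \/
         x = vadd e_o (vscale (1 - 2 * lam) e_b) \/
         x = jvec lam bet 0 \/ x = jvec lam bet 1) /\ x <> vzero)).
Proof.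
  assert (Hl0 : lam <> 0) by lra.
  rewrite inP_iff_Dval_eq0 by exact Hl.
  split; intros HD x; split.
  - intros [Hx0 Hx].
    destruct (idempotent_cases Hl0 Hx) as [Hx' | [Hbasic | Hcramer]];
      [contradiction | exact Hbasic |].
    now destruct (Dval_neq0_of_cramer_solution Hl Hcramer).
  - intros Hbasic; split;
      [exact (basic_idempotent_neq0 Hbasic) | exact (basic_idempotent_idempotent bet Hl0 Hbasic)].
  - intros [Hx0 Hx]; split; [| exact Hx0].
    destruct (idempotent_cases Hl0 Hx) as [Hx' | [Hbasic | Hcramer]]; [contradiction | |].
    + unfold basic_idempotent in Hbasic; tauto.
    + do 5 right; exact (cramer_solution_jvec HD Hcramer).
  - intros [Hx Hx0]; split; [exact Hx0 |].
    destruct Hx as [Hx | [Hx | [Hx | [Hx | [Hx | Hj]]]]];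
      [apply basic_idempotent_idempotent; unfold basic_idempotent; tauto ..
      | destruct Hj as [-> | ->]; apply jvec_idempotent; tauto].
Qed.
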